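(* Let $\omega=(\omega_0,\omega_1,\dots)\in\{0,1\}^{\mathbb{N}}$ have the following property: for every $l>0$ there exists $L>0$ such that for every $k\ge0$ the block $(\omega_k,\dots,\omega_{k+L-1})$ contains $l$ successive zeros. Then $\omega$ is not central, i.e. the set $\{i:\omega_i=1\}$ is not a central set.
   Context: $S\subset\mathbb{N}$ is central if there are a compact metric space $(Z,d)$ with continuous $R:Z\to Z$, a uniformly recurrent point $z_0$ (for every open $U\ni z_0$, $\{n:R^nz_0\in U\}$ has bounded gaps), a point $z$ proximal to $z_0$ ($d(R^{n_k}z,R^{n_k}z_0)\to0$ along some increasing sequence $n_k$), and a neighborhood $U$ of $z_0$ with $S=\{n:R^nz\in U\}$. *)

From HB Require Import structures.
From mathcomp Require Import all_boot all_order all_algebra.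
From mathcomp Require Import all_classical all_reals all_analysis.
From mathcomp Require Import Rstruct Rstruct_topology.
Set Implicit Arguments. Unset Strict Implicit. Unset Printing Implicit Defensive.
Import Order.TTheory GRing.Theory Num.Theory.
Local Open Scope classical_set_scope.
Local Open Scope ring_scope.

Definition uniformly_recurrent (Z : topologicalType) (T : Z -> Z) (z0 : Z) : Prop :=
  forall U : set Z, open U -> U z0 ->
    exists M : nat, forall m : nat, exists n : nat,
      (m <= n <= m + M)%N /\ U (iter n T z0).

Definition proximal (Z : metricType Rdefinitions.R) (T : Z -> Z) (z z0 : Z) : Prop :=
  exists nk : nat -> nat, (forall k, (nk k < nk k.+1)%N) /\
    (fun k => mdist (iter (nk k) T z) (iter (nk k) T z0)) @ \oo --> (0 : Rdefinitions.R).

Definition central (S : set nat) : Prop :=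
  exists (Z : metricType Rdefinitions.R) (T : Z -> Z) (z0 z : Z) (U : set Z),
    [/\ compact [set: Z], continuous T, uniformly_recurrent T z0,
        proximal T z z0 & nbhs z0 U] /\
    S = [set n | U (iter n T z)].

From HB Require Import structures.
From mathcomp Require Import all_boot all_order all_algebra.
From mathcomp Require Import all_classical all_reals all_analysis.
From mathcomp Require Import Rstruct Rstruct_topology.
From mathcomp Require Import lra zify.
Local Open Scope classical_set_scope.
Import Order.TTheory GRing.Theory Num.Theory.
Local Open Scope ring_scope.

(* A central set is piecewise syndetic: the return times of z0 to a small ball
   have bounded gaps M, and proximality together with compactness makes the
   orbit of z shadow that of z0 along arbitrarily long blocks of times, so on
   such blocks S has gaps at most M.  A sequence with arbitrarily long zero
   blocks at bounded distance has gaps in its support of every length inside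
   every long block, hence its support is not central. *)

Lemma continuous_iter (X : topologicalType) (T : X -> X) :
  continuous T -> forall n, continuous (iter n T).
Proof.
move=> cT; elim=> [|n IHn] x /=; first exact: cvg_id.
exact: continuous_comp (IHn x) (cT _).
Qed.

Lemma near_forall_ltn (X : Type) (F : set_system X) (P : nat -> X -> Prop)
    (L : nat) : Filter F ->
  (forall i, (i < L)%N -> \forall x \near F, P i x) ->
  \forall x \near F, forall i, (i < L)%N -> P i x.
Proof.
move=> FF FP; have /filter_forall : forall i : 'I_L, \forall x \near F, P i x.
  by move=> i; exact: FP.
by apply: filterS => x Px i iL; exact: (Px (Ordinal iL)).
Qed.

Lemma proximal_close_on_blocks {Z : metricType Rdefinitions.R} {T : Z -> Z}
    {z z0 : Z} : compact [set: Z] -> continuous T -> proximal T z z0 ->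
  forall (eta : Rdefinitions.R) (L : nat), 0 < eta ->
  exists m, forall i, (i < L)%N ->
    ball (iter (i + m) T z0) eta (iter (i + m) T z).
Proof.
move=> cZ cT [nk [_ dist0]] eta L eta0.
have eta20 : 0 < eta / 2 by rewrite divr_gt0.
pose x k := iter (nk k) T z0; pose y k := iter (nk k) T z.
have [w [_ w_cluster]] := cZ (x @ \oo) _ filterT.
have : \forall v \near w, forall i, (i < L)%N ->
    ball (iter i T w) (eta / 2) (iter i T v).
  apply: near_forall_ltn => i _.
  exact: continuous_iter cT i w _ (nbhsx_ballx _ _ eta20).
move=> /nbhs_ballP [delta /= delta0 iter_close].
have delta20 : 0 < delta / 2 by rewrite divr_gt0.
have [K _ dist_small] := cvgr_lt _ dist0 _ delta20.
have eventually_x : (x @ \oo) [set x k | k in [set k | (K <= k)%N]].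
  by exists K => // k Kk; exists k.
have [_ [[k Kk <-] xk_w]] :=
  w_cluster _ _ eventually_x (nbhsx_ballx _ _ delta20).
have xk_yk : ball (x k) (delta / 2) (y k).
  by rewrite ball_symE ballEmdist; exact: dist_small.
have yk_w : ball w delta (y k) := ball_split xk_w xk_yk.
have {}xk_w : ball w delta (x k) by apply: le_ball xk_w; lra.
exists (nk k) => i iL; rewrite !iterD.
exact: ball_splitr (iter_close _ xk_w _ iL) (iter_close _ yk_w _ iL).
Qed.

Lemma central_piecewise_syndetic (S : set nat) : central S ->
  exists M, forall L, exists m, forall j, (m <= j)%N -> (j + M < m + L)%N ->
    exists2 n, (j <= n <= j + M)%N & S n.
Proof.
move=> [Z [T [z0 [z [U [[cZ cT ur prox /nbhs_ballP [eps /= eps0 epsU]] ->]]]]]].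
have eps20 : 0 < eps / 2 by rewrite divr_gt0.
have [M returns] := ur _ (@open_interior _ (ball z0 (eps / 2)))
  (nbhsx_ballx _ _ eps20).
exists M => L; have [m close] := proximal_close_on_blocks cZ cT prox _ L eps20.
exists m => j mj jM; have [n [jn /interior_subset z0_n]] := returns j.
exists n => //; apply: epsU.
have en : n = (n - m + m)%N by lia.
rewrite en; apply: ball_split (close _ _); first by rewrite -en.
by lia.
Qed.

Local Close Scope ring_scope.

Theorem mainTheorem18 (omega : nat -> bool) :
  (forall l : nat, (0 < l)%N ->
     exists L : nat, (0 < L)%N /\
       forall k : nat, exists j : nat,
         (k <= j)%N /\ (j + l <= k + L)%N /\
         forall t : nat, (t < l)%N -> omega (j + t) = false) ->
  ~ central [set i | omega i = true].
Proof.
move=> zero_blocks /central_piecewise_syndetic [M syndetic].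
have [L [_ blocks]] := zero_blocks M.+1 isT.
have [m hits] := syndetic L.
have [j [mj [jL zeros]]] := blocks m.
have jM : j + M < m + L by rewrite addnS in jL.
have [n /andP [jn nj] omega_n] := hits j mj jM.
have : n - j < M.+1 by lia.
by move=> /zeros; rewrite subnKC //; move: omega_n => /= ->.
Qed.
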